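(* Let $N\ge2$ and $\sigma_1,\dots,\sigma_N>0$. Let $R$ be the $(N-1)\times(N-1)$ tridiagonal matrix with $R_{ii}=1$, $R_{i,i+1}=R_{i+1,i}=-1/2$ (other entries $0$), and $A$ the $(N-1)\times(N-1)$ tridiagonal matrix with $A_{ii}=\sigma_i^2+\sigma_{i+1}^2$, $A_{i,i+1}=A_{i+1,i}=-\sigma_{i+1}^2$ (other entries $0$). Then for $1\le k\le l\le N-1$, $$(R^{-1}AR^{-1})_{kl}=\frac{4(N-k)(N-l)}{N^2}\sum_{p=1}^k\sigma_p^2-\frac{4k(N-l)}{N^2}\sum_{p=k+1}^l\sigma_p^2+\frac{4kl}{N^2}\sum_{p=l+1}^N\sigma_p^2.$$ *)

From mathcomp Require Import all_boot all_order all_algebra.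
Set Implicit Arguments. Unset Strict Implicit. Unset Printing Implicit Defensive.
Import Order.TTheory GRing.Theory Num.Theory.
Local Open Scope ring_scope.

(* Matrices of size (N-1)x(N-1), indexed 0-based by 'I_(N.-1):
   0-based index i corresponds to the paper's 1-based index i+1.
   sigma is indexed 1-based: sigma 1, ..., sigma N. *)

Definition Rmat (F : fieldType) (n : nat) : 'M[F]_n :=
  \matrix_(i < n, j < n)
    (if i == j then 1
     else if ((i.+1 == j) || (j.+1 == i))%N then - (1 / 2%:R) else 0).

Definition Amat (F : fieldType) (n : nat) (sigma : nat -> F) : 'M[F]_n :=
  \matrix_(i < n, j < n)
    (if i == j then sigma i.+1 ^+ 2 + sigma i.+2 ^+ 2
     else if (i.+1 == j)%N then - sigma j.+1 ^+ 2
     else if (j.+1 == i)%N then - sigma i.+1 ^+ 2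
     else 0).

From mathcomp Require Import all_boot all_order all_algebra.
From mathcomp Require Import ring zify.
Set Implicit Arguments.
Unset Strict Implicit.
Unset Printing Implicit Defensive.

Import Order.TTheory GRing.Theory Num.Theory.
Local Open Scope ring_scope.

(* Let Δ be the N x (N-1) difference matrix (Δ_{jj} = 1, Δ_{j+1,j} = -1) and
   S = diag(σ_1², ..., σ_N²). Then R = ½ ΔᵀΔ and A = ΔᵀSΔ, so
   R⁻¹AR⁻¹ = (ΔR⁻¹)ᵀ S (ΔR⁻¹). Let Q ([cstep_mx]) be the matrix whose column k
   is the indicator of the first k points minus its mean. Then ΔᵀQ = 1 and
   QΔᵀ = 1 - J/N with JΔ = 0 (J the all-ones matrix), whence QR = ½Δ, R is
   invertible and ΔR⁻¹ = 2Q.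
   Below N = n + 1 and all indices are 0-based. *)

Lemma sum_mul_delta (R : pzSemiRingType) m (f : nat -> R) (i : nat) :
  \sum_(p < m) f p * (p == i :> nat)%:R = if (i < m)%N then f i else 0.
Proof.
under eq_bigr do rewrite mulr_natr mulrb.
by rewrite -big_mkcond big_ord1_eq.
Qed.

Lemma natr_leq_sub_ltn (R : pzRingType) (p q : nat) :
  ((p <= q)%N)%:R - ((p < q)%N)%:R = (p == q)%:R :> R.
Proof. by rewrite leq_eqVlt; case: eqP => [->|_]; rewrite ?ltnn ?subr0 ?subrr. Qed.

Section Difference.
Variables (F : numFieldType) (n : nat).

Definition diff_coef (p j : nat) : F := (p == j)%:R - (p == j.+1)%:R.

Definition diff_mx : 'M[F]_(n.+1, n) := \matrix_(p, j) diff_coef p j.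

Lemma sum_col_diff_coef (f : nat -> F) (j : 'I_n) :
  \sum_(p < n.+1) diff_coef p j * f p = f j - f j.+1.
Proof.
under eq_bigr do rewrite mulrC mulrBr.
by rewrite sumrB !sum_mul_delta !ltnS ltn_ord ltnW.
Qed.

Lemma sum_row_diff_coef (g : nat -> F) (q : 'I_n.+1) :
  g 0%N = 0 -> g n.+1 = 0 ->
  \sum_(j < n) g j.+1 * diff_coef q j = g q.+1 - g q.
Proof.
move=> g0 gn; under eq_bigr do rewrite mulrBr !(eq_sym (q : nat)).
rewrite sumrB (sum_mul_delta _ (fun j => g j.+1)).
have shift : \sum_(j < n) g j.+1 * (j.+1 == q :> nat)%:R
             = \sum_(c < n.+1) g c * (c == q :> nat)%:R.
  by rewrite big_ord_recl g0 mul0r add0r.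
rewrite shift sum_mul_delta ltn_ord.
case: ltnP => // qn; suff -> : q = n :> nat by rewrite gn.
by apply/eqP; rewrite eqn_leq qn andbT -ltnS.
Qed.

Lemma tr_diff_diag_diffE (w : nat -> F) (i j : 'I_n) :
  (diff_mx^T *m diag_mx (\row_(p < n.+1) w p) *m diff_mx) i j =
  if i == j then w i + w i.+1
  else if (i.+1 == j)%N then - w j
  else if (j.+1 == i)%N then - w i
  else 0.
Proof.
rewrite -mulmxA mul_diag_mx mxE.
under eq_bigr do rewrite !mxE.
rewrite (sum_col_diff_coef (fun p => w p * diff_coef p j)) /diff_coef -val_eqE /=.
case: (ltngtP i j) => [lt|gt|<-].
- rewrite eqSS (ltn_eqF lt).
  have -> : (i == j.+1 :> nat) = false by lia.
  have -> : (j.+1 == i)%N = false by lia.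
  by case: eqP => [<-|_] /=; ring.
- rewrite eqSS (gtn_eqF gt) [(i == _.+1 :> nat)]eq_sym.
  have -> : (i.+1 == j)%N = false by lia.
  by case: eqP => [<-|_] /=; ring.
- rewrite eqxx (ltn_eqF (ltnSn i)) (gtn_eqF (ltnSn i)) /=; ring.
Qed.

Definition cstep (p c : nat) : F := ((p < c)%N)%:R - c%:R / n.+1%:R.

Definition cstep_mx : 'M[F]_(n.+1, n) := \matrix_(p, k) cstep p k.+1.

Lemma cstep_lt p c : (p < c)%N -> cstep p c = 1 - c%:R / n.+1%:R.
Proof. by rewrite /cstep => ->. Qed.

Lemma cstep_ge p c : (c <= p)%N -> cstep p c = - (c%:R / n.+1%:R).
Proof. by rewrite /cstep ltnNge => ->; rewrite sub0r. Qed.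

Lemma tr_diff_mx_cstep : diff_mx^T *m cstep_mx = 1%:M.
Proof.
apply/matrixP => j k; rewrite !mxE.
under eq_bigr do rewrite !mxE.
rewrite (sum_col_diff_coef (fun p => cstep p k.+1)) /cstep addrAC opprD addrA subrK.
by rewrite !ltnS natr_leq_sub_ltn.
Qed.

Lemma cstep_mx_tr_diff :
  cstep_mx *m diff_mx^T = 1%:M - (n.+1%:R)^-1 *: const_mx 1.
Proof.
apply/matrixP => p q; rewrite !mxE.
under eq_bigr do rewrite !mxE.
rewrite sum_row_diff_coef; last 2 first.
- by rewrite /cstep mul0r subr0.
- by rewrite /cstep ltn_ord divff ?subrr // pnatr_eq0.
have -> : cstep p q.+1 - cstep p q
          = ((p < q.+1)%N)%:R - ((p < q)%N)%:R - n.+1%:R^-1.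
  by rewrite /cstep -(natr1 q); ring.
by rewrite ltnS natr_leq_sub_ltn mulr1.
Qed.

Lemma const_mx_diff m : const_mx 1 *m diff_mx = 0 :> 'M_(m, n).
Proof.
apply/matrixP => i j; rewrite !mxE.
under eq_bigr do rewrite !mxE mulrC.
by rewrite (sum_col_diff_coef (fun=> 1)) subrr.
Qed.

Lemma Rmat_tr_diff : Rmat F n = 2^-1 *: (diff_mx^T *m diff_mx).
Proof.
have := tr_diff_diag_diffE (fun=> 1).
rewrite (_ : \row_p 1 = const_mx 1); last by apply/matrixP => ? ?; rewrite !mxE.
rewrite diag_const_mx mulmx1 => tr_diff.
apply/matrixP => i j; rewrite [LHS]mxE [RHS]mxE tr_diff.
case: (i == j); first by rewrite mulVf // pnatr_eq0.
by case: (i.+1 == j)%N; last case: (j.+1 == i)%N; rewrite /= ?mulr0 // mulrN1 div1r.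
Qed.

Lemma Amat_tr_diff (sigma : nat -> F) :
  Amat n sigma = diff_mx^T *m diag_mx (\row_p sigma p.+1 ^+ 2) *m diff_mx.
Proof.
by apply/matrixP => i j; rewrite (tr_diff_diag_diffE (fun p => sigma p.+1 ^+ 2)) mxE.
Qed.

Lemma trmx_Rmat : (Rmat F n)^T = Rmat F n.
Proof. by apply/matrixP => i j; rewrite !mxE eq_sym orbC. Qed.

Lemma cstep_mx_Rmat : cstep_mx *m Rmat F n = 2^-1 *: diff_mx.
Proof.
rewrite Rmat_tr_diff -scalemxAr mulmxA cstep_mx_tr_diff mulmxBl mul1mx.
by rewrite -scalemxAl const_mx_diff scaler0 subr0.
Qed.

Lemma Rmat_unit : Rmat F n \in unitmx.
Proof.
suff /mulmx1_unit[] : (2 *: (cstep_mx^T *m cstep_mx)) *m Rmat F n = 1%:M by [].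
rewrite -scalemxAl -mulmxA cstep_mx_Rmat -scalemxAr -[diff_mx]trmxK -trmx_mul.
by rewrite tr_diff_mx_cstep trmx1 scalerA mulfV ?scale1r // pnatr_eq0.
Qed.

Lemma diff_mx_invRmat : diff_mx *m invmx (Rmat F n) = 2 *: cstep_mx.
Proof.
rewrite -(mulmxK Rmat_unit cstep_mx) cstep_mx_Rmat -scalemxAl scalerA.
by rewrite mulfV ?scale1r // pnatr_eq0.
Qed.

Lemma invRmat_Amat_invRmat (sigma : nat -> F) :
  invmx (Rmat F n) *m Amat n sigma *m invmx (Rmat F n)
  = 4 *: (cstep_mx^T *m diag_mx (\row_p sigma p.+1 ^+ 2) *m cstep_mx).
Proof.
have tr_diff_invR : invmx (Rmat F n) *m diff_mx^T = 2 *: cstep_mx^T.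
  by rewrite -[LHS]trmxK trmx_mul trmxK trmx_inv trmx_Rmat diff_mx_invRmat linearZ.
rewrite Amat_tr_diff !mulmxA tr_diff_invR -!mulmxA diff_mx_invRmat.
by rewrite -scalemxAl -!scalemxAr scalerA mulmxA -natrM.
Qed.

Lemma tr_cstep_diag_cstepE (w : nat -> F) (k l : 'I_n) : (k <= l)%N ->
  (cstep_mx^T *m diag_mx (\row_p w p) *m cstep_mx) k l =
    (1 - k.+1%:R / n.+1%:R) * (1 - l.+1%:R / n.+1%:R) * \sum_(0 <= p < k.+1) w p
    - k.+1%:R / n.+1%:R * (1 - l.+1%:R / n.+1%:R) * \sum_(k.+1 <= p < l.+1) w p
    + k.+1%:R / n.+1%:R * (l.+1%:R / n.+1%:R) * \sum_(l.+1 <= p < n.+1) w p.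
Proof.
move=> le_kl; have lt_ln := ltn_ord l.
have on_range (c : F) m1 m2 :
    (forall p, (m1 <= p < m2)%N -> cstep p k.+1 * cstep p l.+1 = c) ->
    \sum_(m1 <= p < m2) cstep p k.+1 * w p * cstep p l.+1
    = c * \sum_(m1 <= p < m2) w p.
  by move=> cE; rewrite mulr_sumr; apply: eq_big_nat => p /cE <-; ring.
rewrite -mulmxA mul_diag_mx mxE.
under eq_bigr do rewrite !mxE mulrA.
rewrite -(big_mkord xpredT (fun p => cstep p k.+1 * w p * cstep p l.+1)).
rewrite (@big_cat_nat _ _ _ k.+1) //=; last lia.
rewrite (@big_cat_nat _ _ _ l.+1 k.+1 n.+1) //=; try lia.
set a := k.+1%:R / n.+1%:R; set b := l.+1%:R / n.+1%:R.
rewrite (on_range ((1 - a) * (1 - b)) 0 k.+1); last first.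
  by move=> p /andP[_ ?]; rewrite !cstep_lt //; lia.
rewrite (on_range (- (a * (1 - b))) k.+1 l.+1); last first.
  by move=> p /andP[? ?]; rewrite cstep_ge ?cstep_lt ?mulNr //; lia.
rewrite (on_range (a * b) l.+1 n.+1); last first.
  by move=> p /andP[? _]; rewrite !cstep_ge ?mulrNN //; lia.
by rewrite mulNr addrA.
Qed.

End Difference.

Theorem lemma4p5 (F : realFieldType) (N : nat) (sigma : nat -> F)
  (hN : (2 <= N)%N)
  (hsigma : forall p : nat, (1 <= p <= N)%N -> 0 < sigma p)
  (k l : 'I_(N.-1)) (hkl : (k <= l)%N) :
  (invmx (Rmat F N.-1) *m Amat N.-1 sigma *m invmx (Rmat F N.-1)) k l =
    (4 * ((N - k.+1)%N)%:R * ((N - l.+1)%N)%:R / (N ^ 2)%:R)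
      * (\sum_(1 <= p < k.+2) sigma p ^+ 2)
    - (4 * (k.+1)%:R * ((N - l.+1)%N)%:R / (N ^ 2)%:R)
      * (\sum_(k.+2 <= p < l.+2) sigma p ^+ 2)
    + (4 * (k.+1)%:R * (l.+1)%:R / (N ^ 2)%:R)
      * (\sum_(l.+2 <= p < N.+1) sigma p ^+ 2).
Proof.
case: N hN hsigma k l hkl => [//|n] _ _ /= k l le_kl.
have lt_ln := ltn_ord l.
rewrite invRmat_Amat_invRmat mxE (tr_cstep_diag_cstepE (fun p => sigma p.+1 ^+ 2)) //.
rewrite !big_add1 /= natrX !natrB; try lia.
by field; rewrite addrC natr1 pnatr_eq0.
Qed.
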